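(* Every strip $S\subset\mathbb{R}^2$ is foliated homeomorphic to a model strip; that is, there exist a model strip $S'$ and a homeomorphism $h:S\to S'$ mapping each leaf of the canonical foliation of $S$ onto a leaf of the canonical foliation of $S'$.
   Context: A subset $S\subset\mathbb{R}^2$ is a strip if for some real numbers $u<v$ one has $\mathbb{R}\times(u,v)\subset S\subset\mathbb{R}\times[u,v]$ and $S$ is open in the topology of $\mathbb{R}\times[u,v]$. Put $\partial_-S=S\cap(\mathbb{R}\times\{u\})$, $\partial_+S=S\cap(\mathbb{R}\times\{v\})$, $\partial S=\partial_-S\cup\partial_+S$; $\partial S$ is a disjoint union of at most countably many open (possibly unbounded) horizontal intervals, called boundary intervals. A strip is a model strip if in addition every connected component of $\partial S$ is a bounded interval and the closures in $\mathbb{R}\times[u,v]$ of distinct boundary intervals are mutually disjoint. The canonical foliation of a strip $S$ has as leaves the horizontal lines $\mathbb{R}\times\{t\}$, $t\in(u,v)$, and the boundary intervals of $\partial S$. A homeomorphism between foliated surfaces is foliated if it maps each leaf onto a leaf. *)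

From Stdlib Require Import Reals.
Open Scope R_scope.

Definition pt := (R * R)%type.

Definition dist2 (p q : pt) : R :=
  sqrt ((fst p - fst q)^2 + (snd p - snd q)^2).

Definition band (u v : R) (p : pt) : Prop := u <= snd p <= v.

Definition is_strip (S : pt -> Prop) (u v : R) : Prop :=
  u < v /\
  (forall p : pt, u < snd p < v -> S p) /\
  (forall p : pt, S p -> band u v p) /\
  (forall p : pt, S p -> exists eps, 0 < eps /\
      forall q : pt, band u v q -> dist2 p q < eps -> S q).

Definition is_interval (I : R -> Prop) : Prop :=
  forall a b x, I a -> I b -> a <= x <= b -> I x.

(* L is a boundary interval of the strip S (with bounds u,v):
   a connected component of dS = S n (R x {u,v}), i.e. a maximal
   nonempty horizontal interval {c} x I contained in S, c in {u,v}. *)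
Definition boundary_interval (S : pt -> Prop) (u v : R) (L : pt -> Prop) : Prop :=
  exists (c : R) (I : R -> Prop),
    (c = u \/ c = v) /\
    is_interval I /\
    (exists x, I x) /\
    (forall x, I x -> S (x, c)) /\
    (forall J : R -> Prop, is_interval J -> (forall x, I x -> J x) ->
        (forall x, J x -> S (x, c)) -> forall x, J x -> I x) /\
    (forall p : pt, L p <-> (snd p = c /\ I (fst p))).

Definition leaf (S : pt -> Prop) (u v : R) (L : pt -> Prop) : Prop :=
  (exists t, u < t < v /\ forall p : pt, L p <-> snd p = t) \/
  boundary_interval S u v L.

Definition band_closure (u v : R) (A : pt -> Prop) (p : pt) : Prop :=
  band u v p /\ forall eps, 0 < eps -> exists q, A q /\ dist2 p q < eps.

Definition is_model_strip (S : pt -> Prop) (u v : R) : Prop :=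
  is_strip S u v /\
  (forall L, boundary_interval S u v L ->
     exists M, forall p, L p -> Rabs (fst p) <= M) /\
  (forall L1 L2, boundary_interval S u v L1 -> boundary_interval S u v L2 ->
     (exists p, L1 p /\ ~ L2 p \/ L2 p /\ ~ L1 p) ->
     forall p, ~ (band_closure u v L1 p /\ band_closure u v L2 p)).

Definition continuous_on (A : pt -> Prop) (f : pt -> pt) : Prop :=
  forall p, A p -> forall eps, 0 < eps -> exists delta, 0 < delta /\
    forall q, A q -> dist2 p q < delta -> dist2 (f p) (f q) < eps.

Definition homeomorphism (A B : pt -> Prop) (h g : pt -> pt) : Prop :=
  (forall p, A p -> B (h p)) /\
  (forall q, B q -> A (g q)) /\
  (forall p, A p -> g (h p) = p) /\
  (forall q, B q -> h (g q) = q) /\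
  continuous_on A h /\ continuous_on B g.

(* Write h(x, t) = (F(x, t), t) with every F(., t) increasing.  On an edge t = c the boundary
   intervals are the components of the open set O = {x | (x, c) in S}, and F(., c) is
   atan x + sum_n 2^-n [x > a_n], where a_n is the right end of the component of O containing
   the n-th rational (when that end is finite).  Between two components there is such a right
   end, so the step there opens a gap in the image: the image components are bounded (by the
   atan) and have disjoint closures.  In the interior the steps are smoothed into ramps of
   width the distance to the edge, which keeps F continuous, and a term (t - u)(v - t) x makes
   each interior row onto R.  Monotonicity on rows makes the inverse continuous as well. *)

From Stdlib Require Import Reals Lra Lia Classical ClassicalEpsilon Cantor ZArith.
From Coquelicot Require Import Coquelicot.
Open Scope R_scope.

(** * Weighted series *)

Definition weight (n : nat) : R := (/2)^n.

Lemma weight_pos n : 0 < weight n.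
Proof. apply pow_lt. lra. Qed.

Lemma weight_le_1 n : weight n <= 1.
Proof. unfold weight. induction n; simpl; lra. Qed.

Lemma is_series_weight : is_series weight 2.
Proof.
  replace 2 with (/ (1 - /2)) by field. apply is_series_geom.
  rewrite Rabs_pos_eq; lra.
Qed.

Lemma ex_series_weight : ex_series weight.
Proof. exists 2. apply is_series_weight. Qed.

Lemma Series_weight : Series weight = 2.
Proof. apply is_series_unique, is_series_weight. Qed.

Lemma ex_series_weight_dominated (d : nat -> R) :
  (forall n, Rabs (d n) <= weight n) -> ex_series d.
Proof. intros H. apply (ex_series_le d weight); [apply H | apply ex_series_weight]. Qed.

Lemma Series_ge_0 (a : nat -> R) : (forall n, 0 <= a n) -> ex_series a -> 0 <= Series a.
Proof.
  intros H E. replace 0 with (Series (fun n => 0 * a n)).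
  - apply Series_le; auto. intros n; split; [lra | rewrite Rmult_0_l; auto].
  - rewrite Series_scal_l. ring.
Qed.

Lemma Series_ge_term (d : nat -> R) n : (forall m, 0 <= d m) -> ex_series d -> d n <= Series d.
Proof.
  intros H E. rewrite (Series_incr_n d (S n)) by (auto; lia). simpl Init.Nat.pred.
  assert (d n <= sum_f_R0 d n).
  { destruct n; simpl; [lra|]. pose proof (cond_pos_sum d n H). lra. }
  assert (0 <= Series (fun k => d (S n + k)%nat)).
  { apply Series_ge_0; [intros; apply H | apply (ex_series_incr_n d (S n)), E]. }
  lra.
Qed.

Definition wsum (c : nat -> R) : R := Series (fun n => weight n * c n).

Definition unit_valued (c : nat -> R) : Prop := forall n, 0 <= c n <= 1.

Lemma weight_mul_abs_le n a : Rabs a <= 1 -> Rabs (weight n * a) <= weight n.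
Proof.
  intros Ha. pose proof (weight_pos n). rewrite Rabs_mult, (Rabs_pos_eq (weight n)) by lra.
  pose proof (Rabs_pos a). nra.
Qed.

Lemma unit_valued_abs c n : unit_valued c -> Rabs (c n) <= 1.
Proof. intros H. specialize (H n). apply Rabs_le. lra. Qed.

Lemma unit_valued_abs_diff c c' n : unit_valued c -> unit_valued c' -> Rabs (c n - c' n) <= 1.
Proof. intros H H'. specialize (H n). specialize (H' n). apply Rabs_le. lra. Qed.

Lemma ex_series_wsum c : unit_valued c -> ex_series (fun n => weight n * c n).
Proof.
  intros H. apply ex_series_weight_dominated. intros n. apply weight_mul_abs_le, unit_valued_abs, H.
Qed.

Lemma wsum_range c : unit_valued c -> 0 <= wsum c <= 2.
Proof.
  intros H. split.
  - apply Series_ge_0; [|apply ex_series_wsum; auto].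
    intros n. pose proof (weight_pos n). specialize (H n). nra.
  - rewrite <- Series_weight. apply Series_le; [|apply ex_series_weight].
    intros n. pose proof (weight_pos n). specialize (H n). nra.
Qed.

Lemma wsum_le c c' : unit_valued c -> unit_valued c' -> (forall n, c n <= c' n) ->
  wsum c <= wsum c'.
Proof.
  intros H H' Hle. apply Series_le; [|apply ex_series_wsum; auto].
  intros n. pose proof (weight_pos n). specialize (H n). specialize (Hle n). nra.
Qed.

Lemma wsum_jump c c' n0 : unit_valued c -> unit_valued c' -> (forall n, c n <= c' n) ->
  c n0 = 0 -> c' n0 = 1 -> wsum c + weight n0 <= wsum c'.
Proof.
  intros H H' Hle H0 H1.
  assert (Hterm : weight n0 <= Series (fun n => weight n * c' n - weight n * c n)).
  { replace (weight n0) with (weight n0 * c' n0 - weight n0 * c n0) by (rewrite H0, H1; ring).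
    apply (Series_ge_term (fun n => weight n * c' n - weight n * c n)).
    - intros m. pose proof (weight_pos m). specialize (Hle m). nra.
    - apply ex_series_weight_dominated. intros m. rewrite <- Rmult_minus_distr_l.
      apply weight_mul_abs_le, unit_valued_abs_diff; auto. }
  unfold wsum. rewrite Series_minus in Hterm by (apply ex_series_wsum; auto). lra.
Qed.

Lemma sum_f_R0_le_const (d : nat -> R) N eta : (forall m, (m <= N)%nat -> d m <= eta) ->
  sum_f_R0 d N <= INR (S N) * eta.
Proof.
  induction N; intros H.
  - specialize (H 0%nat (le_n _)). simpl. lra.
  - assert (sum_f_R0 d N <= INR (S N) * eta) by (apply IHN; intros; apply H; lia).
    specialize (H (S N) (le_n _)). rewrite (S_INR (S N)). simpl sum_f_R0. lra.
Qed.

(* The head [0..N] is controlled by [eta], the tail by its total weight [2 (1/2)^(N+1)]. *)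
Lemma wsum_dist c c' N eta : unit_valued c -> unit_valued c' ->
  (forall m, (m <= N)%nat -> Rabs (c m - c' m) <= eta) ->
  Rabs (wsum c - wsum c') <= INR (S N) * eta + 2 * weight (S N).
Proof.
  intros H H' Hhead. unfold wsum.
  rewrite <- Series_minus by (apply ex_series_wsum; auto).
  set (d := fun n => weight n * c n - weight n * c' n).
  assert (Hd : forall n, Rabs (d n) = weight n * Rabs (c n - c' n)).
  { intros n. unfold d. rewrite <- Rmult_minus_distr_l, Rabs_mult, Rabs_pos_eq; auto.
    left; apply weight_pos. }
  assert (Hd1 : forall n, Rabs (d n) <= weight n).
  { intros n. unfold d. rewrite <- Rmult_minus_distr_l.
    apply weight_mul_abs_le, unit_valued_abs_diff; auto. }
  assert (EA : ex_series (fun n => Rabs (d n))).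
  { apply ex_series_weight_dominated. intros n. rewrite Rabs_Rabsolu. auto. }
  eapply Rle_trans; [apply Series_Rabs; auto|].
  rewrite (Series_incr_n _ (S N)) by (auto; lia). simpl Init.Nat.pred.
  apply Rplus_le_compat.
  - apply sum_f_R0_le_const. intros m Hm. rewrite Hd.
    pose proof (Hhead m Hm). pose proof (weight_pos m). pose proof (weight_le_1 m).
    pose proof (Rabs_pos (c m - c' m)). nra.
  - replace (2 * weight (S N)) with (Series (fun k => weight (S N + k)%nat)).
    + apply Series_le; [intros k; split; [apply Rabs_pos | apply Hd1]|].
      apply (ex_series_incr_n weight (S N)), ex_series_weight.
    + rewrite (Series_ext _ (fun k => weight (S N) * weight k)).
      * rewrite Series_scal_l, Series_weight. ring.
      * intros k. unfold weight. rewrite pow_add. ring.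
Qed.
(** * Right ends of components of an open set *)

(* [n] codes a triple [(a, (b, k))] and [dense_seq n = (a - b) / (k + 1)]: every rational occurs. *)
Definition dense_seq (n : nat) : R :=
  let p := Cantor.of_nat n in let p2 := Cantor.of_nat (snd p) in
  (INR (fst p) - INR (fst p2)) / INR (S (snd p2)).

Lemma IZR_le_INR_to_nat z : IZR z <= INR (Z.to_nat z).
Proof.
  destruct (Z.le_gt_cases 0 z).
  - rewrite INR_IZR_INZ, Z2Nat.id; [lra|lia].
  - pose proof (pos_INR (Z.to_nat z)). apply IZR_lt in H. lra.
Qed.

Lemma IZR_to_nat_split k : IZR k = INR (Z.to_nat k) - INR (Z.to_nat (- k)).
Proof.
  destruct k; simpl.
  - lra.
  - rewrite INR_IZR_INZ, positive_nat_Z. lra.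
  - rewrite INR_IZR_INZ, positive_nat_Z, <- Pos2Z.opp_pos, opp_IZR. lra.
Qed.

(* The witness is [up (x M) / M] with [M > 1 / d]. *)
Lemma dense_seq_between x d : 0 < d -> exists n, x < dense_seq n < x + d.
Proof.
  intros Hd.
  set (c := Z.to_nat (up (/ d))).
  set (M := INR (S c)).
  assert (HdM : 1 < d * M).
  { pose proof (archimed (/ d)) as [H1 _]. pose proof (IZR_le_INR_to_nat (up (/ d))).
    assert (/ d < M) by (unfold M, c; rewrite S_INR; lra).
    apply (Rmult_lt_reg_l (/ d)); [apply Rinv_0_lt_compat; lra|].
    rewrite <- Rmult_assoc, Rinv_l, Rmult_1_l, Rmult_1_r by lra. lra. }
  assert (HM : 0 < M) by (unfold M; apply lt_0_INR; lia).
  set (k := up (x * M)).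
  pose proof (archimed (x * M)) as [H1 H2]. fold k in H1, H2.
  exists (Cantor.to_nat (Z.to_nat k, Cantor.to_nat (Z.to_nat (- k), c))).
  unfold dense_seq. rewrite Cantor.cancel_of_to; cbn [fst snd].
  rewrite Cantor.cancel_of_to; cbn [fst snd].
  rewrite <- IZR_to_nat_split. fold M.
  split; apply (Rmult_lt_reg_r M); auto; unfold Rdiv; rewrite Rmult_assoc, Rinv_l; lra.
Qed.

Definition openR (O : R -> Prop) : Prop :=
  forall x, O x -> exists d, 0 < d /\ forall y, Rabs (y - x) < d -> O y.

Definition has_right_end (O : R -> Prop) (q : R) : Prop :=
  O q /\ exists z, q <= z /\ ~ O z.

Definition right_reach (O : R -> Prop) (q t : R) : Prop :=
  q <= t /\ forall y, q <= y <= t -> O y.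

Lemma right_reach_lub O q : has_right_end O q -> {a | is_lub (right_reach O q) a}.
Proof.
  intros [Hq Hz]. apply completeness.
  - destruct Hz as [z [Hz1 Hz2]]. exists z. intros t [Ht1 Ht2].
    destruct (Rle_lt_dec t z); auto. exfalso. apply Hz2, Ht2. lra.
  - exists q. split; [lra|]. intros y Hy. replace y with q by lra. auto.
Qed.

Definition right_end (O : R -> Prop) (q : R) : R :=
  match excluded_middle_informative (has_right_end O q) with
  | left H => proj1_sig (right_reach_lub O q H)
  | right _ => 0
  end.

Section RightEnd.
Variables (O : R -> Prop) (q : R).
Hypothesis O_open : openR O.
Hypothesis q_end : has_right_end O q.

Lemma right_end_is_lub : is_lub (right_reach O q) (right_end O q).
Proof.
  unfold right_end. destruct (excluded_middle_informative (has_right_end O q)); [|tauto].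
  apply proj2_sig.
Qed.

Lemma right_end_between y : q <= y < right_end O q -> O y.
Proof.
  intros Hy. destruct right_end_is_lub as [_ Hl].
  destruct (classic (exists t, right_reach O q t /\ y <= t)) as [[t [[_ Ht] Hyt]]|Hn].
  - apply Ht. lra.
  - exfalso. assert (right_end O q <= y); [|lra].
    apply Hl. intros t Ht. destruct (Rle_lt_dec t y); auto.
    exfalso. apply Hn. exists t. split; auto; lra.
Qed.

Lemma right_end_le z : q <= z -> ~ O z -> right_end O q <= z.
Proof.
  intros Hz HO. destruct right_end_is_lub as [_ Hl]. apply Hl.
  intros t [_ Ht]. destruct (Rle_lt_dec t z); auto. exfalso. apply HO, Ht. lra.
Qed.

Lemma right_end_gt : q < right_end O q.
Proof.
  destruct q_end as [HOq _]. destruct (O_open q HOq) as [d [Hd Hd2]].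
  destruct right_end_is_lub as [Hub _].
  assert (Hreach : right_reach O q (q + d / 2)).
  { split; [lra|]. intros y Hy. apply Hd2, Rabs_def1; lra. }
  specialize (Hub _ Hreach). lra.
Qed.

Lemma right_end_notin : ~ O (right_end O q).
Proof.
  intros HO. destruct (O_open _ HO) as [d [Hd Hd2]].
  destruct right_end_is_lub as [Hub _]. pose proof right_end_gt.
  assert (Hreach : right_reach O q (right_end O q + d / 2)).
  { split; [lra|]. intros y Hy. destruct (Rlt_le_dec y (right_end O q)).
    - apply right_end_between; lra.
    - apply Hd2, Rabs_def1; lra. }
  specialize (Hub _ Hreach). lra.
Qed.

End RightEnd.
(** * Continuity in two variables *)

Definition cont2_at (P : R -> R -> Prop) (f : R -> R -> R) (a0 b0 : R) : Prop :=
  forall eps, 0 < eps -> exists d, 0 < d /\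
    forall a b, P a b -> Rabs (a - a0) < d -> Rabs (b - b0) < d -> Rabs (f a b - f a0 b0) < eps.

Lemma continuity_pt_Rabs (k : R -> R) x0 : continuity_pt k x0 ->
  forall eps, 0 < eps -> exists d, 0 < d /\ forall x, Rabs (x - x0) < d -> Rabs (k x - k x0) < eps.
Proof.
  intros Hc eps He. destruct (Hc eps He) as [d [Hd H]]. exists d. split; auto.
  intros x Hx. destruct (Req_dec x x0) as [->|Hne].
  - rewrite Rminus_diag, Rabs_R0. auto.
  - apply (H x). split; [split; [exact I | auto] | exact Hx].
Qed.

Lemma continuity_pt_lipschitz (k : R -> R) x0 :
  (forall x y, Rabs (k x - k y) <= Rabs (x - y)) -> continuity_pt k x0.
Proof.
  intros Hk eps He. exists eps. split; auto. intros x [_ Hx]. simpl in *. unfold R_dist in *.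
  eapply Rle_lt_trans; [apply Hk | exact Hx].
Qed.

Section Cont2.
Variables (P : R -> R -> Prop) (a0 b0 : R).

Lemma cont2_at_const c : cont2_at P (fun _ _ => c) a0 b0.
Proof. intros eps He. exists 1. split; [lra|]. intros. rewrite Rminus_diag, Rabs_R0. auto. Qed.

Lemma cont2_at_fst (k : R -> R) : continuity_pt k a0 -> cont2_at P (fun a _ => k a) a0 b0.
Proof.
  intros Hk eps He. destruct (continuity_pt_Rabs k a0 Hk eps He) as [d [Hd H]].
  exists d. split; auto.
Qed.

Lemma cont2_at_snd (k : R -> R) : continuity_pt k b0 -> cont2_at P (fun _ b => k b) a0 b0.
Proof.
  intros Hk eps He. destruct (continuity_pt_Rabs k b0 Hk eps He) as [d [Hd H]].
  exists d. split; auto.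
Qed.

Lemma cont2_at_comp (k : R -> R) f : continuity_pt k (f a0 b0) -> cont2_at P f a0 b0 ->
  cont2_at P (fun a b => k (f a b)) a0 b0.
Proof.
  intros Hk Hf eps He. destruct (continuity_pt_Rabs k _ Hk eps He) as [d1 [Hd1 H1]].
  destruct (Hf d1 Hd1) as [d [Hd H]]. exists d. split; auto.
Qed.

Lemma cont2_at_plus f g : cont2_at P f a0 b0 -> cont2_at P g a0 b0 ->
  cont2_at P (fun a b => f a b + g a b) a0 b0.
Proof.
  intros Hf Hg eps He.
  destruct (Hf (eps / 2)) as [d1 [Hd1 H1]]; [lra|]. destruct (Hg (eps / 2)) as [d2 [Hd2 H2]]; [lra|].
  exists (Rmin d1 d2). split; [apply Rmin_pos; auto|]. intros a b HP Ha Hb.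
  pose proof (Rmin_l d1 d2). pose proof (Rmin_r d1 d2).
  specialize (H1 a b HP ltac:(lra) ltac:(lra)). specialize (H2 a b HP ltac:(lra) ltac:(lra)).
  replace (f a b + g a b - (f a0 b0 + g a0 b0)) with ((f a b - f a0 b0) + (g a b - g a0 b0)) by ring.
  eapply Rle_lt_trans; [apply Rabs_triang | lra].
Qed.

Lemma cont2_at_mult f g : cont2_at P f a0 b0 -> cont2_at P g a0 b0 ->
  cont2_at P (fun a b => f a b * g a b) a0 b0.
Proof.
  intros Hf Hg eps He.
  set (Mf := Rabs (f a0 b0) + 1). set (Mg := Rabs (g a0 b0) + 1).
  assert (HMf : 0 < Mf) by (unfold Mf; pose proof (Rabs_pos (f a0 b0)); lra).
  assert (HMg : 0 < Mg) by (unfold Mg; pose proof (Rabs_pos (g a0 b0)); lra).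
  destruct (Hf (eps / (2 * Mg))) as [d1 [Hd1 H1]]; [apply Rdiv_lt_0_compat; lra|].
  destruct (Hg (Rmin 1 (eps / (2 * Mf)))) as [d2 [Hd2 H2]].
  { apply Rmin_pos; [lra | apply Rdiv_lt_0_compat; lra]. }
  exists (Rmin d1 d2). split; [apply Rmin_pos; auto|]. intros a b HP Ha Hb.
  pose proof (Rmin_l d1 d2). pose proof (Rmin_r d1 d2).
  specialize (H1 a b HP ltac:(lra) ltac:(lra)). specialize (H2 a b HP ltac:(lra) ltac:(lra)).
  pose proof (Rmin_l 1 (eps / (2 * Mf))). pose proof (Rmin_r 1 (eps / (2 * Mf))).
  replace (f a b * g a b - f a0 b0 * g a0 b0)
    with ((f a b - f a0 b0) * g a b + f a0 b0 * (g a b - g a0 b0)) by ring.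
  eapply Rle_lt_trans; [apply Rabs_triang|]. rewrite !Rabs_mult.
  assert (Rabs (g a b) <= Mg).
  { unfold Mg. replace (g a b) with (g a0 b0 + (g a b - g a0 b0)) by ring.
    eapply Rle_trans; [apply Rabs_triang | lra]. }
  assert (Rabs (f a b - f a0 b0) * Rabs (g a b) <= eps / (2 * Mg) * Mg)
    by (apply Rmult_le_compat; try apply Rabs_pos; lra).
  assert (Rabs (f a0 b0) * Rabs (g a b - g a0 b0) <= Rabs (f a0 b0) * (eps / (2 * Mf)))
    by (apply Rmult_le_compat_l; [apply Rabs_pos | lra]).
  assert (Rabs (f a0 b0) * (eps / (2 * Mf)) < eps / 2).
  { replace (eps / 2) with (Mf * (eps / (2 * Mf))) by (field; lra).
    apply Rmult_lt_compat_r; [apply Rdiv_lt_0_compat; lra | unfold Mf; lra]. }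
  replace (eps / (2 * Mg) * Mg) with (eps / 2) in * by (field; lra). lra.
Qed.

Lemma cont2_at_locally_eq f g : P a0 b0 ->
  (exists r, 0 < r /\ forall a b, P a b -> Rabs (a - a0) < r -> Rabs (b - b0) < r -> f a b = g a b) ->
  cont2_at P g a0 b0 -> cont2_at P f a0 b0.
Proof.
  intros HP0 [r [Hr Hfg]] Hg eps He. destruct (Hg eps He) as [d [Hd H]].
  exists (Rmin d r). split; [apply Rmin_pos; auto|]. intros a b HP Ha Hb.
  pose proof (Rmin_l d r). pose proof (Rmin_r d r).
  rewrite (Hfg a b), (Hfg a0 b0) by (first [assumption | rewrite Rminus_diag, Rabs_R0 | idtac]; lra).
  apply H; auto; lra.
Qed.

End Cont2.

Definition clamp01 (s : R) : R := Rmin 1 (Rmax 0 s).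

Definition ramp (e s : R) : R :=
  if Rlt_dec 0 e then clamp01 (s / e) else if Rlt_dec 0 s then 1 else 0.

Lemma clamp01_range s : 0 <= clamp01 s <= 1.
Proof. unfold clamp01, Rmin, Rmax. repeat destruct Rle_dec; lra. Qed.

Lemma clamp01_le s s' : s <= s' -> clamp01 s <= clamp01 s'.
Proof. intros. unfold clamp01, Rmin, Rmax. repeat destruct Rle_dec; lra. Qed.

Lemma clamp01_lipschitz a b : Rabs (clamp01 a - clamp01 b) <= Rabs (a - b).
Proof.
  unfold clamp01, Rmin, Rmax. repeat destruct Rle_dec; unfold Rabs; repeat destruct Rcase_abs; lra.
Qed.

Lemma ramp_range e s : 0 <= ramp e s <= 1.
Proof. unfold ramp. destruct Rlt_dec; [apply clamp01_range | destruct Rlt_dec; lra]. Qed.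

Lemma ramp_le e s s' : s <= s' -> ramp e s <= ramp e s'.
Proof.
  intros H. unfold ramp. destruct Rlt_dec.
  - apply clamp01_le. apply Rmult_le_compat_r; auto. left; apply Rinv_0_lt_compat; auto.
  - repeat destruct Rlt_dec; lra.
Qed.

Lemma ramp_cont e0 s0 : 0 < e0 \/ (e0 = 0 /\ s0 <> 0) -> cont2_at (fun e _ => 0 <= e) ramp e0 s0.
Proof.
  intros [He0|[-> Hs0]].
  - apply cont2_at_locally_eq with (g := fun e s => clamp01 (s * / e)); [lra| |].
    + exists e0. split; auto. intros e s _ He _. apply Rabs_def2 in He.
      unfold ramp. destruct Rlt_dec; [reflexivity | lra].
    + apply cont2_at_comp; [apply continuity_pt_lipschitz, clamp01_lipschitz|].
      apply cont2_at_mult.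
      * apply cont2_at_snd. reg.
      * apply cont2_at_fst. reg. lra.
  - apply cont2_at_locally_eq with (g := fun _ _ => ramp 0 s0); [lra| |apply cont2_at_const].
    exists (Rabs s0 / 2). split; [apply Rabs_pos_lt in Hs0; lra|].
    intros e s He He0 Hs. rewrite Rminus_0_r, Rabs_pos_eq in He0 by lra.
    unfold ramp. destruct (Rlt_dec 0 0); [lra|].
    destruct (Rlt_dec 0 s0) as [Hp|Hn].
    + rewrite (Rabs_pos_eq s0) in Hs, He0 by lra. apply Rabs_def2 in Hs.
      destruct (Rlt_dec 0 e); [|destruct Rlt_dec; lra].
      assert (1 <= s / e).
      { apply (Rmult_le_reg_r e); auto. unfold Rdiv. rewrite Rmult_assoc, Rinv_l; lra. }
      unfold clamp01. rewrite Rmax_right, Rmin_left; lra.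
    + rewrite (Rabs_left s0) in Hs, He0 by lra. apply Rabs_def2 in Hs.
      destruct (Rlt_dec 0 e); [|destruct Rlt_dec; lra].
      assert (s / e <= 0).
      { unfold Rdiv. assert (0 < / e) by (apply Rinv_0_lt_compat; auto). nra. }
      unfold clamp01. rewrite Rmax_left, Rmin_right; lra.
Qed.

Lemma cont2_at_swap_lipschitz (P Q : R -> R -> Prop) (f : R -> R -> R) (k : R -> R) a0 b0 :
  (forall a b, P a b -> Q (k b) a) -> (forall b, Rabs (k b - k b0) <= Rabs (b - b0)) ->
  cont2_at Q f (k b0) a0 -> cont2_at P (fun a b => f (k b) a) a0 b0.
Proof.
  intros HPQ Hk Hf eps He. destruct (Hf eps He) as [d [Hd H]].
  exists d. split; auto. intros a b HP Ha Hb. apply H; auto. eapply Rle_lt_trans; eauto.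
Qed.

Lemma is_interval_Icc a b : is_interval (fun x => a <= x <= b).
Proof. intros p q x Hp Hq Hx. lra. Qed.

Lemma is_interval_union (I K : R -> Prop) a : is_interval I -> is_interval K -> I a -> K a ->
  is_interval (fun x => I x \/ K x).
Proof.
  intros HI HK Ia Ka p q x Hp Hq Hx.
  destruct (Rle_lt_dec x a).
  - destruct Hp as [Hp|Hp]; [left; apply (HI p a) | right; apply (HK p a)]; auto; lra.
  - destruct Hq as [Hq|Hq]; [left; apply (HI a q) | right; apply (HK a q)]; auto; lra.
Qed.

Definition maximal_interval (A I : R -> Prop) : Prop :=
  is_interval I /\ (exists x, I x) /\ (forall x, I x -> A x) /\
  (forall J : R -> Prop, is_interval J -> (forall x, I x -> J x) -> (forall x, J x -> A x) ->
     forall x, J x -> I x).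

Lemma maximal_interval_extend A I a b : maximal_interval A I -> I a \/ I b ->
  (forall z, a <= z <= b -> A z) -> forall z, a <= z <= b -> I z.
Proof.
  intros [HI [_ [HIA Hmax]]] Hab HA z Hz.
  assert (Hle : a <= b) by lra.
  apply (Hmax (fun x => I x \/ a <= x <= b)); auto.
  - destruct Hab as [Ha|Hb].
    + apply (is_interval_union I _ a); auto. apply is_interval_Icc. lra.
    + apply (is_interval_union I _ b); auto. apply is_interval_Icc. lra.
  - intros x [Hx|Hx]; auto.
Qed.

Lemma maximal_interval_meet A I1 I2 y : maximal_interval A I1 -> maximal_interval A I2 ->
  I1 y -> I2 y -> forall x, I1 x <-> I2 x.
Proof.
  intros [HI1 [_ [HA1 Hmax1]]] [HI2 [_ [HA2 Hmax2]]] Hy1 Hy2.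
  assert (HK : is_interval (fun x => I1 x \/ I2 x)) by (apply (is_interval_union I1 I2 y); auto).
  assert (HKA : forall x, I1 x \/ I2 x -> A x) by (intros x [Hx|Hx]; auto).
  intros x. split; intros Hx.
  - apply (Hmax2 _ HK); auto.
  - apply (Hmax1 _ HK); auto.
Qed.

(** * The boundary map of an open set *)

Definition jump_term (O : R -> Prop) (n : nat) (e x : R) : R :=
  if excluded_middle_informative (has_right_end O (dense_seq n))
  then ramp e (x - right_end O (dense_seq n)) else 0.

Definition jump_sum (O : R -> Prop) (e x : R) : R := wsum (fun n => jump_term O n e x).

Definition boundary_map (O : R -> Prop) (x : R) : R := atan x + jump_sum O 0 x.

Lemma jump_term_unit_valued O e x : unit_valued (fun n => jump_term O n e x).
Proof. intros n. unfold jump_term. destruct excluded_middle_informative; [apply ramp_range | lra]. Qed.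

Lemma jump_term_le O n e x x' : x <= x' -> jump_term O n e x <= jump_term O n e x'.
Proof.
  intros H. unfold jump_term. destruct excluded_middle_informative; [apply ramp_le; lra | lra].
Qed.

Lemma jump_sum_range O e x : 0 <= jump_sum O e x <= 2.
Proof. apply wsum_range, jump_term_unit_valued. Qed.

Lemma jump_sum_le O e x x' : x <= x' -> jump_sum O e x <= jump_sum O e x'.
Proof.
  intros H. apply wsum_le; try apply jump_term_unit_valued. intros n. apply jump_term_le, H.
Qed.

Lemma boundary_map_lt O x x' : x < x' -> boundary_map O x < boundary_map O x'.
Proof.
  intros H. unfold boundary_map. pose proof (atan_increasing _ _ H).
  pose proof (jump_sum_le O 0 x x'). lra.
Qed.

Lemma boundary_map_bound O x : - PI / 2 < boundary_map O x < PI / 2 + 2.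
Proof. unfold boundary_map. pose proof (atan_bound x). pose proof (jump_sum_range O 0 x). lra. Qed.

Section BoundaryMap.
Variable O : R -> Prop.
Hypothesis O_open : openR O.

Lemma jump_sum_0_const x1 x2 : x1 <= x2 -> (forall y, x1 <= y <= x2 -> O y) ->
  jump_sum O 0 x2 = jump_sum O 0 x1.
Proof.
  intros H12 HO. unfold jump_sum, wsum. apply Series_ext. intros n. f_equal.
  unfold jump_term. destruct excluded_middle_informative as [Hr|]; auto.
  pose proof (right_end_notin O _ O_open Hr). set (a := right_end O (dense_seq n)) in *.
  unfold ramp. destruct (Rlt_dec 0 0); [lra|].
  destruct (Rlt_le_dec a x1); [|destruct (Rle_lt_dec a x2)].
  - do 2 (destruct Rlt_dec; try lra).
  - exfalso. apply H, HO. lra.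
  - do 2 (destruct Rlt_dec; try lra).
Qed.

(* On an interval inside [O], [boundary_map O] is [atan] shifted by a constant. *)
Lemma boundary_map_solve x1 x2 y : x1 <= x2 -> (forall z, x1 <= z <= x2 -> O z) ->
  boundary_map O x1 <= y <= boundary_map O x2 -> exists z, x1 <= z <= x2 /\ boundary_map O z = y.
Proof.
  intros H12 HO Hy.
  set (K := jump_sum O 0 x1).
  assert (HG : forall z, x1 <= z <= x2 -> boundary_map O z = atan z + K).
  { intros z Hz. unfold boundary_map, K. rewrite (jump_sum_0_const x1 z); [lra | lra |].
    intros; apply HO; lra. }
  rewrite (HG x1), (HG x2) in Hy by lra.
  pose proof (atan_bound x1). pose proof (atan_bound x2).
  set (z := tan (y - K)).
  assert (Hz : atan z = y - K) by (apply atan_tan; lra).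
  assert (x1 <= z).
  { destruct (Rle_lt_dec x1 z); auto. pose proof (atan_increasing _ _ r). lra. }
  assert (z <= x2).
  { destruct (Rle_lt_dec z x2); auto. pose proof (atan_increasing _ _ r). lra. }
  exists z. split; [lra|]. rewrite HG by lra. lra.
Qed.

Lemma boundary_map_jump n y : has_right_end O (dense_seq n) -> right_end O (dense_seq n) < y ->
  boundary_map O (right_end O (dense_seq n)) + weight n < boundary_map O y.
Proof.
  intros Hr Hy. set (a := right_end O (dense_seq n)) in *.
  unfold boundary_map. pose proof (atan_increasing _ _ Hy).
  assert (jump_sum O 0 a + weight n <= jump_sum O 0 y); [|lra].
  apply wsum_jump with (n0 := n); try apply jump_term_unit_valued.
  - intros m. apply jump_term_le. lra.
  - unfold jump_term. destruct excluded_middle_informative; [|tauto].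
    fold a. unfold ramp. do 2 (destruct Rlt_dec; try lra).
  - unfold jump_term. destruct excluded_middle_informative; [|tauto].
    fold a. unfold ramp. do 2 (destruct Rlt_dec; try lra).
Qed.

(* A point outside [O] between [x1] and [x2] forces a right end [a] of a component of [O]
   in [[x1, x2)]; the jump of [boundary_map O] at [a] is a gap in its image. *)
Lemma boundary_map_gap x1 x2 z : x1 < x2 -> O x1 -> O x2 -> x1 <= z <= x2 -> ~ O z ->
  exists c gam, 0 < gam /\ boundary_map O x1 < c /\ c + gam < boundary_map O x2 /\
    forall y, O y -> boundary_map O y < c \/ c + gam < boundary_map O y.
Proof.
  intros H12 H1 H2 Hz HOz.
  destruct (O_open x1 H1) as [d [Hd Hd2]].
  destruct (dense_seq_between x1 d Hd) as [n Hn].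
  assert (HOq : O (dense_seq n)) by (apply Hd2, Rabs_def1; lra).
  assert (Hzq : dense_seq n <= z).
  { destruct (Rle_lt_dec (dense_seq n) z); auto. exfalso. apply HOz, Hd2, Rabs_def1; lra. }
  assert (Hr : has_right_end O (dense_seq n)) by (split; auto; exists z; auto).
  set (a := right_end O (dense_seq n)).
  pose proof (right_end_notin O _ O_open Hr) as Ha1. pose proof (right_end_gt O _ O_open Hr) as Ha2.
  pose proof (right_end_le O _ Hr z Hzq HOz) as Ha3. fold a in Ha1, Ha2, Ha3.
  assert (Hax2 : a < x2) by (destruct (Rle_lt_dec x2 a); [replace a with x2 in Ha1 by lra|]; tauto).
  exists (boundary_map O a), (weight n). split; [apply weight_pos|].
  split; [apply boundary_map_lt; lra|]. split; [apply boundary_map_jump; auto|].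
  intros y Hy. destruct (Rtotal_order y a) as [h|[->|h]].
  - left. apply boundary_map_lt, h.
  - tauto.
  - right. apply boundary_map_jump; auto.
Qed.

Lemma boundary_map_dichotomy x1 x2 : x1 < x2 -> O x1 -> O x2 ->
  (forall z, x1 <= z <= x2 -> O z) \/
  exists c gam, 0 < gam /\ boundary_map O x1 < c /\ c + gam < boundary_map O x2 /\
    forall y, O y -> boundary_map O y < c \/ c + gam < boundary_map O y.
Proof.
  intros H12 H1 H2.
  destruct (classic (exists z, x1 <= z <= x2 /\ ~ O z)) as [[z [Hz HOz]]|Hn].
  - right. apply (boundary_map_gap x1 x2 z); auto.
  - left. intros z Hz. apply NNPP. intros HOz. apply Hn. exists z. auto.
Qed.

Lemma jump_term_cont n e0 x0 : 0 < e0 \/ (e0 = 0 /\ O x0) ->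
  cont2_at (fun e _ => 0 <= e) (jump_term O n) e0 x0.
Proof.
  intros H. unfold jump_term. destruct excluded_middle_informative as [Hr|]; [|apply cont2_at_const].
  set (a := right_end O (dense_seq n)). pose proof (right_end_notin O _ O_open Hr) as Ha. fold a in Ha.
  intros eps Heps. destruct (ramp_cont e0 (x0 - a)) with eps as [d [Hd Hd2]]; auto.
  { destruct H as [H|[H HOx]]; [left; auto|]. right. split; auto. intros E.
    replace x0 with a in HOx by lra. tauto. }
  exists d. split; auto. intros e x He H1 H2. apply Hd2; auto.
  replace (x - a - (x0 - a)) with (x - x0) by ring. auto.
Qed.

Lemma jump_term_cont_upto N e0 x0 : 0 < e0 \/ (e0 = 0 /\ O x0) ->
  forall eps, 0 < eps -> exists d, 0 < d /\ forall e x, 0 <= e -> Rabs (e - e0) < d ->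
    Rabs (x - x0) < d -> forall m, (m <= N)%nat -> Rabs (jump_term O m e x - jump_term O m e0 x0) < eps.
Proof.
  intros H eps Heps. induction N.
  - destruct (jump_term_cont 0 e0 x0 H eps Heps) as [d [Hd Hd2]]. exists d. split; auto.
    intros e x He H1 H2 m Hm. replace m with 0%nat by lia. auto.
  - destruct IHN as [d1 [Hd1 H1]]. destruct (jump_term_cont (S N) e0 x0 H eps Heps) as [d2 [Hd2 H2]].
    exists (Rmin d1 d2). split; [apply Rmin_pos; auto|].
    intros e x He Hee Hxx m Hm. pose proof (Rmin_l d1 d2). pose proof (Rmin_r d1 d2).
    destruct (Nat.eq_dec m (S N)) as [->|].
    + apply H2; auto; lra.
    + apply H1; auto; lra || lia.
Qed.

Lemma jump_sum_cont e0 x0 : 0 < e0 \/ (e0 = 0 /\ O x0) ->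
  cont2_at (fun e _ => 0 <= e) (jump_sum O) e0 x0.
Proof.
  intros H eps Heps.
  destruct (pow_lt_1_zero (/2)) with (eps / 8) as [N HN]; [rewrite Rabs_pos_eq; lra | lra|].
  specialize (HN (S N) ltac:(lia)). rewrite Rabs_pos_eq in HN by (apply pow_le; lra).
  fold (weight (S N)) in HN.
  assert (HSN : 0 < INR (S N)) by (apply lt_0_INR; lia).
  set (eta := eps / (4 * INR (S N))).
  destruct (jump_term_cont_upto N e0 x0 H eta) as [d [Hd Hd2]]; [apply Rdiv_lt_0_compat; lra|].
  exists d. split; auto. intros e x He H1 H2.
  eapply Rle_lt_trans; [apply (wsum_dist _ _ N eta); try apply jump_term_unit_valued|].
  - intros m Hm. left. apply Hd2; auto.
  - replace (INR (S N) * eta) with (eps / 4) by (unfold eta; field; lra). lra.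
Qed.

Definition boundary_image (y : R) : Prop := exists x, O x /\ boundary_map O x = y.

Lemma boundary_image_interval_fill (K : R -> Prop) a b : is_interval K ->
  (forall y, K y -> boundary_image y) -> a <= b -> O a -> O b ->
  K (boundary_map O a) -> K (boundary_map O b) -> forall z, a <= z <= b -> O z.
Proof.
  intros HK HKO Hab Ha Hb Ka Kb.
  destruct (Req_dec a b) as [<-|Hne]; [intros z Hz; replace z with a by lra; auto|].
  destruct (boundary_map_dichotomy a b) as [Hall|[c0 [gam [Hg [Hc1 [Hc2 Hgap]]]]]]; auto; [lra|].
  exfalso. destruct (HKO c0) as [w [Hw Ew]].
  - apply (HK (boundary_map O a) (boundary_map O b)); auto. lra.
  - destruct (Hgap w Hw); lra.
Qed.

Lemma boundary_map_image_maximal (I : R -> Prop) : maximal_interval O I ->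
  maximal_interval boundary_image (fun y => exists x, I x /\ boundary_map O x = y).
Proof.
  intros HIm. pose proof HIm as [HI [[x0 Hx0] [HIO _]]].
  split; [|split; [|split]].
  - intros y1 y2 y [x1 [Hx1 <-]] [x2 [Hx2 <-]] Hy.
    assert (x1 <= x2).
    { destruct (Rle_lt_dec x1 x2); auto. pose proof (boundary_map_lt O x2 x1 r). lra. }
    assert (Hin : forall z, x1 <= z <= x2 -> I z) by (intros z Hz; apply (HI x1 x2); auto).
    destruct (boundary_map_solve x1 x2 y) as [z [Hz <-]]; auto.
    exists z. auto.
  - exists (boundary_map O x0), x0. auto.
  - intros y [x [Hx <-]]. exists x. auto.
  - intros K HK HIK HKO y Hy.
    destruct (HKO y Hy) as [w [Hw <-]]. exists w. split; auto.
    assert (Kx0 : K (boundary_map O x0)) by (apply HIK; exists x0; auto).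
    destruct (Rle_lt_dec w x0).
    + apply (maximal_interval_extend O I w x0); auto; [|lra].
      apply (boundary_image_interval_fill K); auto.
    + apply (maximal_interval_extend O I x0 w); auto; [|lra].
      apply (boundary_image_interval_fill K); auto; lra.
Qed.

Lemma boundary_image_separate (I1 I2 : R -> Prop) x1 x2 :
  maximal_interval boundary_image I1 -> maximal_interval boundary_image I2 ->
  (forall y, I1 y -> I2 y -> False) -> x1 < x2 -> O x1 -> O x2 ->
  I1 (boundary_map O x1) -> I2 (boundary_map O x2) ->
  exists c gam, 0 < gam /\ (forall y, I1 y -> y < c) /\ (forall y, I2 y -> c + gam < y).
Proof.
  intros HI1 HI2 Hdis H12 Hx1 Hx2 Hy1 Hy2.
  pose proof HI1 as [HI1i [_ [HI1A _]]]. pose proof HI2 as [HI2i [_ [HI2A _]]].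
  destruct (boundary_map_dichotomy x1 x2) as [Hall|[c [gam [Hg [Hc1 [Hc2 Hgap]]]]]]; auto.
  - exfalso. pose proof (boundary_map_lt O x1 x2 H12).
    apply (Hdis (boundary_map O x2)); auto.
    apply (maximal_interval_extend boundary_image I1 (boundary_map O x1) (boundary_map O x2)); auto; [|lra].
    intros y Hy. destruct (boundary_map_solve x1 x2 y) as [z [Hz <-]]; auto; [lra|].
    exists z. auto.
  - exists c, gam. split; auto. split.
    + intros y Hy. destruct (Rlt_le_dec y c); auto. exfalso.
      destruct (HI1A c) as [w [Hw Ew]]; [apply (HI1i (boundary_map O x1) y); auto; lra|].
      destruct (Hgap w Hw); lra.
    + intros y Hy. destruct (Rlt_le_dec (c + gam) y); auto. exfalso.
      destruct (HI2A (c + gam)) as [w [Hw Ew]]; [apply (HI2i y (boundary_map O x2)); auto; lra|].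
      destruct (Hgap w Hw); lra.
Qed.

End BoundaryMap.

(** * Straightening a strip *)

Lemma dist2_same_row x y c : dist2 (x, c) (y, c) = Rabs (x - y).
Proof.
  unfold dist2; cbn [fst snd].
  replace ((x - y) ^ 2 + (c - c) ^ 2) with (Rsqr (x - y)) by (unfold Rsqr; ring).
  apply sqrt_Rsqr_abs.
Qed.

Lemma dist2_ge_fst p q : Rabs (fst p - fst q) <= dist2 p q.
Proof.
  unfold dist2. rewrite <- sqrt_Rsqr_abs. apply sqrt_le_1_alt. unfold Rsqr.
  pose proof (pow2_ge_0 (snd p - snd q)). simpl in *. nra.
Qed.

Lemma dist2_ge_snd p q : Rabs (snd p - snd q) <= dist2 p q.
Proof.
  unfold dist2. rewrite <- sqrt_Rsqr_abs. apply sqrt_le_1_alt. unfold Rsqr.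
  pose proof (pow2_ge_0 (fst p - fst q)). simpl in *. nra.
Qed.

Lemma dist2_le_sum p q : dist2 p q <= Rabs (fst p - fst q) + Rabs (snd p - snd q).
Proof.
  pose proof (Rabs_pos (fst p - fst q)). pose proof (Rabs_pos (snd p - snd q)).
  unfold dist2. rewrite <- (sqrt_pow2 (Rabs (fst p - fst q) + Rabs (snd p - snd q))) by lra.
  apply sqrt_le_1_alt.
  rewrite <- (pow2_abs (fst p - fst q)), <- (pow2_abs (snd p - snd q)). nra.
Qed.

Lemma band_closure_row u v (L : pt -> Prop) c p :
  (forall q, L q -> snd q = c) -> band_closure u v L p -> snd p = c.
Proof.
  intros HL [_ Hcl]. destruct (Req_dec (snd p) c) as [E|E]; auto. exfalso.
  destruct (Hcl (Rabs (snd p - c))) as [q [Hq Hd]]; [apply Rabs_pos_lt; lra|].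
  pose proof (dist2_ge_snd p q). rewrite (HL q Hq) in H. lra.
Qed.

Lemma band_closure_separated u v (L1 L2 : pt -> Prop) c gam p : 0 < gam ->
  (forall q, L1 q -> fst q < c) -> (forall q, L2 q -> c + gam < fst q) ->
  ~ (band_closure u v L1 p /\ band_closure u v L2 p).
Proof.
  intros Hg H1 H2 [[_ C1] [_ C2]].
  destruct (C1 (gam / 2)) as [q1 [Hq1 Hd1]]; [lra|].
  destruct (C2 (gam / 2)) as [q2 [Hq2 Hd2]]; [lra|].
  apply H1 in Hq1. apply H2 in Hq2.
  pose proof (dist2_ge_fst p q1). pose proof (dist2_ge_fst p q2).
  assert (Hx1 : Rabs (fst p - fst q1) < gam / 2) by lra.
  assert (Hx2 : Rabs (fst p - fst q2) < gam / 2) by lra.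
  apply Rabs_def2 in Hx1. apply Rabs_def2 in Hx2. lra.
Qed.

Lemma boundary_interval_components S u v L : boundary_interval S u v L <->
  exists c I, (c = u \/ c = v) /\ maximal_interval (fun x => S (x, c)) I /\
    forall p, L p <-> snd p = c /\ I (fst p).
Proof.
  unfold boundary_interval, maximal_interval.
  split; intros [c [I H]]; exists c, I; tauto.
Qed.

Lemma maximal_interval_ext (A B I : R -> Prop) : (forall x, A x <-> B x) ->
  maximal_interval A I -> maximal_interval B I.
Proof.
  intros HAB [HI [Hne [HIA Hmax]]]. split; [|split; [|split]]; auto.
  - intros x Hx. apply HAB; auto.
  - intros J HJ HIJ HJB. apply Hmax; auto. intros x Hx. apply HAB; auto.
Qed.

Section Strip.
Variables (S : pt -> Prop) (u v : R).
Hypothesis S_strip : is_strip S u v.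

Definition edge (c x : R) : Prop := S (x, c).

Lemma strip_lt : u < v.
Proof. apply S_strip. Qed.

Lemma strip_band p : S p -> u <= snd p <= v.
Proof. apply S_strip. Qed.

Lemma strip_interior x t : u < t < v -> S (x, t).
Proof. intros H. apply S_strip. exact H. Qed.

Lemma edge_open c : c = u \/ c = v -> openR (edge c).
Proof.
  intros Hc x Hx. destruct S_strip as [Huv [_ [_ Hop]]]. destruct (Hop _ Hx) as [e [He H]].
  exists e. split; auto. intros y Hy. apply H.
  - unfold band; simpl. destruct Hc; subst; lra.
  - rewrite dist2_same_row, Rabs_minus_sym. auto.
Qed.

Definition lower_weight (t : R) : R := (v - t) / (v - u).

Definition straighten (x t : R) : R :=
  atan x + (t - u) * (v - t) * x + lower_weight t * jump_sum (edge u) (t - u) x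
  + (1 - lower_weight t) * jump_sum (edge v) (v - t) x.

Lemma lower_weight_range t : u <= t <= v -> 0 <= lower_weight t <= 1.
Proof.
  intros H. pose proof strip_lt. unfold lower_weight. split.
  - apply Rdiv_le_0_compat; lra.
  - apply (Rmult_le_reg_r (v - u)); [lra|]. unfold Rdiv. rewrite Rmult_assoc, Rinv_l; lra.
Qed.

Lemma straighten_edge c x : c = u \/ c = v -> straighten x c = boundary_map (edge c) x.
Proof.
  pose proof strip_lt. unfold straighten, boundary_map, lower_weight.
  intros [->| ->]; rewrite Rminus_diag.
  - replace ((v - u) / (v - u)) with 1 by (field; lra). ring.
  - replace (0 / (v - u)) with 0 by (field; lra). ring.
Qed.

Lemma straighten_lt t x x' : u <= t <= v -> x < x' -> straighten x t < straighten x' t.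
Proof.
  intros Ht H. unfold straighten. pose proof (lower_weight_range t Ht).
  pose proof (atan_increasing _ _ H).
  pose proof (jump_sum_le (edge u) (t - u) x x' ltac:(lra)).
  pose proof (jump_sum_le (edge v) (v - t) x x' ltac:(lra)).
  assert (0 <= (t - u) * (v - t)) by (apply Rmult_le_pos; lra).
  nra.
Qed.

Lemma straighten_le t x x' : u <= t <= v -> x <= x' -> straighten x t <= straighten x' t.
Proof. intros Ht [H| ->]; [left; apply straighten_lt | right]; auto. Qed.

Lemma straighten_bounds t x : u <= t <= v ->
  atan x + (t - u) * (v - t) * x <= straighten x t <= atan x + (t - u) * (v - t) * x + 2.
Proof.
  intros Ht. unfold straighten. pose proof (lower_weight_range t Ht).
  pose proof (jump_sum_range (edge u) (t - u) x). pose proof (jump_sum_range (edge v) (v - t) x).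
  nra.
Qed.

Lemma straighten_cont x0 t0 : S (x0, t0) -> cont2_at (fun x t => S (x, t)) straighten x0 t0.
Proof.
  intros H0. pose proof strip_lt. pose proof (strip_band _ H0) as Hb; simpl in Hb.
  assert (Hw : forall k, continuity_pt k t0 -> cont2_at (fun x t => S (x, t)) (fun _ t => k t) x0 t0)
    by (intros; apply cont2_at_snd; auto).
  unfold straighten. repeat apply cont2_at_plus.
  - apply cont2_at_fst, derivable_continuous_pt, derivable_pt_atan.
  - apply cont2_at_mult; [apply Hw; reg | apply cont2_at_fst; reg].
  - apply cont2_at_mult; [apply Hw; unfold lower_weight; reg|].
    apply (cont2_at_swap_lipschitz _ (fun e _ => 0 <= e) (jump_sum (edge u)) (fun t => t - u)).
    + intros x t HS. pose proof (strip_band _ HS). simpl in *. lra.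
    + intros t. right. f_equal. ring.
    + apply jump_sum_cont; [apply edge_open; auto|].
      destruct (Rle_lt_dec t0 u); [right; split; [lra|] | left; lra].
      unfold edge. replace u with t0 by lra. auto.
  - apply cont2_at_mult; [apply Hw; unfold lower_weight; reg|].
    apply (cont2_at_swap_lipschitz _ (fun e _ => 0 <= e) (jump_sum (edge v)) (fun t => v - t)).
    + intros x t HS. pose proof (strip_band _ HS). simpl in *. lra.
    + intros t. right. rewrite <- Rabs_Ropp. f_equal. ring.
    + apply jump_sum_cont; [apply edge_open; auto|].
      destruct (Rle_lt_dec v t0); [right; split; [lra|] | left; lra].
      unfold edge. replace v with t0 by lra. auto.
Qed.

Lemma straighten_row_continuous t x0 : u < t < v -> continuity_pt (fun x => straighten x t) x0.
Proof.
  intros Ht eps He. destruct (straighten_cont x0 t (strip_interior x0 t Ht) eps He) as [d [Hd H]].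
  exists d. split; auto. intros x [_ Hx]. simpl in *. unfold R_dist in *.
  apply H; [apply strip_interior; auto | auto | rewrite Rminus_diag, Rabs_R0; auto].
Qed.

Lemma straighten_onto t y : u < t < v -> exists x, straighten x t = y.
Proof.
  intros Ht. pose proof PI_4. pose proof PI_RGT_0.
  set (k := (t - u) * (v - t)).
  assert (Hk : 0 < k) by (unfold k; apply Rmult_lt_0_compat; lra).
  set (a := (y - 10) / k). set (b := (y + 10) / k).
  assert (Ha : k * a = y - 10) by (unfold a; field; lra).
  assert (Hb : k * b = y + 10) by (unfold b; field; lra).
  assert (Hab : a < b) by (apply (Rmult_lt_reg_l k); auto; lra).
  pose proof (straighten_bounds t a ltac:(lra)) as Ba. pose proof (straighten_bounds t b ltac:(lra)) as Bb.
  pose proof (atan_bound a). pose proof (atan_bound b). fold k in Ba, Bb.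
  destruct (Ranalysis5.IVT_interv (fun z => straighten z t - y) a b) as [z [_ Hz]]; auto.
  - intros z _. apply continuity_pt_minus; [apply straighten_row_continuous; auto | reg].
  - simpl. lra.
  - simpl. lra.
  - exists z. simpl in Hz. lra.
Qed.

Definition strip_map (p : pt) : pt := (straighten (fst p) (snd p), snd p).

Definition image_strip (q : pt) : Prop := exists p, S p /\ strip_map p = q.

Definition strip_inv (q : pt) : pt :=
  match excluded_middle_informative (image_strip q) with
  | left H => proj1_sig (constructive_indefinite_description _ H)
  | right _ => q
  end.

Lemma strip_inv_spec q : image_strip q -> S (strip_inv q) /\ strip_map (strip_inv q) = q.
Proof.
  intros H. unfold strip_inv. destruct excluded_middle_informative; [|tauto].
  apply (proj2_sig (constructive_indefinite_description _ i)).
Qed.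

Lemma strip_map_inj p p' : S p -> S p' -> strip_map p = strip_map p' -> p = p'.
Proof.
  intros H H' E. destruct p as [x t], p' as [x' t']. unfold strip_map in E; simpl in E.
  injection E as E1 <-. pose proof (strip_band _ H) as Hb; simpl in Hb.
  destruct (Rtotal_order x x') as [l|[->|l]]; auto;
    [pose proof (straighten_lt t x x' Hb l) | pose proof (straighten_lt t x' x Hb l)]; lra.
Qed.

Lemma image_strip_interior y t : u < t < v -> image_strip (y, t).
Proof.
  intros Ht. destruct (straighten_onto t y Ht) as [x Hx]. exists (x, t).
  split; [apply strip_interior; auto | unfold strip_map; simpl; rewrite Hx; auto].
Qed.

Lemma image_strip_band q : image_strip q -> u <= snd q <= v.
Proof. intros [p [Hp <-]]. exact (strip_band p Hp). Qed.

Lemma image_strip_edge c y : c = u \/ c = v ->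
  image_strip (y, c) <-> boundary_image (edge c) y.
Proof.
  intros Hc. split.
  - intros [[x t] [Hp E]]. unfold strip_map in E; simpl in E. injection E as <- ->.
    exists x. split; auto. symmetry. apply straighten_edge, Hc.
  - intros [x [Hx <-]]. exists (x, c). split; auto.
    unfold strip_map; simpl. rewrite straighten_edge; auto.
Qed.

Lemma strip_row_open x0 t0 : S (x0, t0) ->
  exists d, 0 < d /\ forall y, Rabs (y - x0) < d -> S (y, t0).
Proof.
  intros H0. pose proof (strip_band _ H0) as Hb; simpl in Hb.
  destruct (Rlt_le_dec u t0); [destruct (Rlt_le_dec t0 v)|].
  - exists 1. split; [lra|]. intros y _. apply strip_interior; lra.
  - apply (edge_open t0); [right; lra | exact H0].
  - apply (edge_open t0); [left; lra | exact H0].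
Qed.

Lemma strip_rows_near t0 : u <= t0 <= v ->
  exists d, 0 < d /\ forall t y, u <= t <= v -> Rabs (t - t0) < d -> S (y, t0) -> S (y, t).
Proof.
  intros Ht0. pose proof strip_lt.
  destruct (Rlt_le_dec u t0); [destruct (Rlt_le_dec t0 v)|].
  - exists (Rmin (t0 - u) (v - t0)). split; [apply Rmin_pos; lra|].
    intros t y Ht Htt _. pose proof (Rmin_l (t0 - u) (v - t0)). pose proof (Rmin_r (t0 - u) (v - t0)).
    apply Rabs_def2 in Htt. apply strip_interior. lra.
  - exists (v - u). split; [lra|]. intros t y Ht Htt Hy. apply Rabs_def2 in Htt.
    destruct (Req_dec t t0) as [->|]; auto. apply strip_interior. lra.
  - exists (v - u). split; [lra|]. intros t y Ht Htt Hy. apply Rabs_def2 in Htt.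
    destruct (Req_dec t t0) as [->|]; auto. apply strip_interior. lra.
Qed.

(* Rows vary continuously and each [straighten _ t] is increasing, so a point whose image is
   close to that of [(x0, t0)] lies between the neighbours [xl] and [xr] of [x0]. *)
Lemma straighten_sandwich xl x0 xr t0 : xl < x0 < xr -> u <= t0 <= v ->
  S (xl, t0) -> S (xr, t0) ->
  exists d, 0 < d /\ forall x t, S (x, t) -> Rabs (t - t0) < d ->
    Rabs (straighten x t - straighten x0 t0) < d -> xl < x < xr.
Proof.
  intros Hx Ht0 Hl Hr.
  pose proof (straighten_lt t0 xl x0 Ht0 ltac:(lra)). pose proof (straighten_lt t0 x0 xr Ht0 ltac:(lra)).
  set (m := Rmin (straighten x0 t0 - straighten xl t0) (straighten xr t0 - straighten x0 t0)).
  assert (Hm : 0 < m) by (apply Rmin_pos; lra).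
  assert (m <= straighten x0 t0 - straighten xl t0) by apply Rmin_l.
  assert (m <= straighten xr t0 - straighten x0 t0) by apply Rmin_r.
  destruct (straighten_cont xl t0 Hl (m / 2)) as [dl [Hdl Cl]]; [lra|].
  destruct (straighten_cont xr t0 Hr (m / 2)) as [dr [Hdr Cr]]; [lra|].
  destruct (strip_rows_near t0 Ht0) as [tb [Htb Hrows]].
  set (d := Rmin (Rmin dl dr) (Rmin (m / 2) tb)).
  assert (Hd : 0 < d) by (repeat apply Rmin_pos; lra).
  assert (d <= dl /\ d <= dr /\ d <= m / 2 /\ d <= tb) as (D1 & D2 & D3 & D4).
  { unfold d. pose proof (Rmin_l (Rmin dl dr) (Rmin (m / 2) tb)).
    pose proof (Rmin_r (Rmin dl dr) (Rmin (m / 2) tb)).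
    pose proof (Rmin_l dl dr). pose proof (Rmin_r dl dr).
    pose proof (Rmin_l (m / 2) tb). pose proof (Rmin_r (m / 2) tb). lra. }
  exists d. split; auto. intros x t Hxt Ht HF.
  pose proof (strip_band _ Hxt) as Hb; simpl in Hb. apply Rabs_def2 in HF.
  assert (Hl' : Rabs (straighten xl t - straighten xl t0) < m / 2)
    by (apply Cl; [apply Hrows | rewrite Rminus_diag, Rabs_R0 |]; auto; lra).
  assert (Hr' : Rabs (straighten xr t - straighten xr t0) < m / 2)
    by (apply Cr; [apply Hrows | rewrite Rminus_diag, Rabs_R0 |]; auto; lra).
  apply Rabs_def2 in Hl'. apply Rabs_def2 in Hr'.
  split.
  - destruct (Rlt_le_dec xl x); auto. pose proof (straighten_le t x xl Hb r). lra.
  - destruct (Rlt_le_dec x xr); auto. pose proof (straighten_le t xr x Hb r). lra.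
Qed.

Lemma strip_map_cont : continuous_on S strip_map.
Proof.
  intros [x0 t0] Hp eps He.
  destruct (straighten_cont x0 t0 Hp (eps / 2)) as [d [Hd Hd2]]; [lra|].
  exists (Rmin d (eps / 2)). split; [apply Rmin_pos; lra|].
  intros [x t] Hq Hdist. pose proof (Rmin_l d (eps / 2)). pose proof (Rmin_r d (eps / 2)).
  pose proof (dist2_ge_fst (x0, t0) (x, t)). pose proof (dist2_ge_snd (x0, t0) (x, t)). simpl in *.
  eapply Rle_lt_trans; [apply dist2_le_sum|]. unfold strip_map; simpl.
  assert (Rabs (straighten x t - straighten x0 t0) < eps / 2)
    by (apply Hd2; auto; rewrite Rabs_minus_sym; lra).
  rewrite Rabs_minus_sym. lra.
Qed.

Lemma strip_inv_cont : continuous_on image_strip strip_inv.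
Proof.
  intros q0 Hq0 eps He.
  destruct (strip_inv_spec q0 Hq0) as [Hp0 Eq0]. destruct (strip_inv q0) as [x0 t0].
  pose proof (strip_band _ Hp0) as Hb0; simpl in Hb0.
  destruct (strip_row_open x0 t0 Hp0) as [r [Hr Hrow]].
  set (r' := Rmin (eps / 2) (r / 2)).
  assert (Hr'0 : 0 < r') by (apply Rmin_pos; lra).
  assert (Hr'1 : r' <= eps / 2) by apply Rmin_l.
  assert (Hr'2 : r' <= r / 2) by apply Rmin_r.
  destruct (straighten_sandwich (x0 - r') x0 (x0 + r') t0) as [d [Hd Hsw]];
    [lra | lra | apply Hrow, Rabs_def1; lra | apply Hrow, Rabs_def1; lra |].
  exists (Rmin d (eps / 2)). split; [apply Rmin_pos; lra|]. intros q Hq Hdist.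
  pose proof (Rmin_l d (eps / 2)). pose proof (Rmin_r d (eps / 2)).
  destruct (strip_inv_spec q Hq) as [Hp Eq]. destruct (strip_inv q) as [x t].
  rewrite <- Eq0, <- Eq in Hdist. unfold strip_map in Hdist; simpl in Hdist.
  pose proof (dist2_ge_fst (straighten x0 t0, t0) (straighten x t, t)).
  pose proof (dist2_ge_snd (straighten x0 t0, t0) (straighten x t, t)). simpl in *.
  assert (x0 - r' < x < x0 + r') by (apply (Hsw x t); auto; rewrite Rabs_minus_sym; lra).
  eapply Rle_lt_trans; [apply dist2_le_sum|]. simpl.
  assert (Rabs (x0 - x) < eps / 2) by (apply Rabs_def1; lra).
  lra.
Qed.

Lemma strip_map_homeomorphism : homeomorphism S image_strip strip_map strip_inv.
Proof.
  split; [|split; [|split; [|split; [|split]]]].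
  - intros p Hp. exists p. auto.
  - intros q Hq. apply strip_inv_spec, Hq.
  - intros p Hp. assert (Hq : image_strip (strip_map p)) by (exists p; auto).
    destruct (strip_inv_spec _ Hq). apply strip_map_inj; auto.
  - intros q Hq. apply strip_inv_spec, Hq.
  - apply strip_map_cont.
  - apply strip_inv_cont.
Qed.

(* Near an edge point the image contains a horizontal neighbourhood (by [boundary_map_solve])
   and all nearby interior rows. *)
Lemma image_strip_open_at_edge c x : c = u \/ c = v -> S (x, c) ->
  exists eps, 0 < eps /\ forall q, band u v q -> dist2 (strip_map (x, c)) q < eps -> image_strip q.
Proof.
  intros Hc Hx. pose proof strip_lt.
  destruct (edge_open c Hc x Hx) as [d [Hd Hin]].
  set (x1 := x - d / 2). set (x2 := x + d / 2).
  assert (Hseg : forall z, x1 <= z <= x2 -> edge c z) by (intros z Hz; apply Hin, Rabs_def1; unfold x1, x2 in Hz; lra).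
  pose proof (boundary_map_lt (edge c) x1 x ltac:(unfold x1; lra)).
  pose proof (boundary_map_lt (edge c) x x2 ltac:(unfold x2; lra)).
  set (G := boundary_map (edge c)) in *.
  set (eps := Rmin (v - u) (Rmin (G x - G x1) (G x2 - G x))).
  assert (0 < eps /\ eps <= v - u /\ eps <= G x - G x1 /\ eps <= G x2 - G x) as (He & He1 & He2 & He3).
  { unfold eps. pose proof (Rmin_l (v - u) (Rmin (G x - G x1) (G x2 - G x))).
    pose proof (Rmin_r (v - u) (Rmin (G x - G x1) (G x2 - G x))).
    pose proof (Rmin_l (G x - G x1) (G x2 - G x)). pose proof (Rmin_r (G x - G x1) (G x2 - G x)).
    repeat split; try lra. repeat apply Rmin_pos; lra. }
  exists eps. split; auto. intros [y s] Hbq Hdist. unfold band in Hbq; simpl in Hbq.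
  pose proof (dist2_ge_snd (strip_map (x, c)) (y, s)) as Hs.
  pose proof (dist2_ge_fst (strip_map (x, c)) (y, s)) as Hf.
  unfold strip_map in *; simpl in *. rewrite straighten_edge in * by auto. fold G in Hs, Hf, Hdist.
  destruct (Req_dec s c) as [->|E].
  - apply image_strip_edge; auto.
    assert (Hy : Rabs (G x - y) < eps) by lra. apply Rabs_def2 in Hy.
    destruct (boundary_map_solve (edge c) (edge_open c Hc) x1 x2 y) as [z [Hz Ez]]; auto.
    + unfold x1, x2; lra.
    + fold G. lra.
    + exists z. auto.
  - apply image_strip_interior. assert (Hcs : Rabs (c - s) < v - u) by lra.
    apply Rabs_def2 in Hcs. destruct Hc; subst c; lra.
Qed.

Lemma image_strip_is_strip : is_strip image_strip u v.
Proof.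
  pose proof strip_lt. split; [|split; [|split]]; auto.
  - intros [y t] Ht. apply image_strip_interior, Ht.
  - intros q Hq. apply image_strip_band, Hq.
  - intros q [[x t] [Hp <-]]. pose proof (strip_band _ Hp) as Hb; simpl in Hb.
    destruct (Rlt_le_dec u t); [destruct (Rlt_le_dec t v)|].
    + exists (Rmin (t - u) (v - t)). split; [apply Rmin_pos; lra|].
      intros [y s] Hbq Hd. pose proof (dist2_ge_snd (strip_map (x, t)) (y, s)). simpl in *.
      pose proof (Rmin_l (t - u) (v - t)). pose proof (Rmin_r (t - u) (v - t)).
      apply image_strip_interior. assert (Hts : Rabs (t - s) < Rmin (t - u) (v - t)) by lra.
      apply Rabs_def2 in Hts. lra.
    + apply image_strip_open_at_edge; auto; right; lra.
    + apply image_strip_open_at_edge; auto; left; lra.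
Qed.

Lemma image_strip_edge_components c I : c = u \/ c = v ->
  maximal_interval (fun y => image_strip (y, c)) I -> maximal_interval (boundary_image (edge c)) I.
Proof. intros Hc. apply maximal_interval_ext. intros y. apply image_strip_edge, Hc. Qed.

Lemma image_strip_boundary_bounded L : boundary_interval image_strip u v L ->
  exists M, forall p, L p -> Rabs (fst p) <= M.
Proof.
  intros [c [I [Hc [_ [_ [HIS [_ HL]]]]]]]. exists 4. intros p Hp.
  apply HL in Hp as [_ Hp]. apply HIS, image_strip_edge in Hp as [x [_ <-]]; auto.
  pose proof (boundary_map_bound (edge c) x). pose proof PI_4. pose proof PI_RGT_0.
  apply Rabs_le. lra.
Qed.

Lemma image_strip_boundary_closures_disjoint L1 L2 :
  boundary_interval image_strip u v L1 -> boundary_interval image_strip u v L2 ->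
  (exists p, L1 p /\ ~ L2 p \/ L2 p /\ ~ L1 p) ->
  forall p, ~ (band_closure u v L1 p /\ band_closure u v L2 p).
Proof.
  intros H1 H2 Hdiff p [C1 C2].
  apply boundary_interval_components in H1 as [c [I1 [Hc [HI1 HL1]]]].
  apply boundary_interval_components in H2 as [c2 [I2 [_ [HI2 HL2]]]].
  assert (snd p = c) as Ep by (apply (band_closure_row u v L1); auto; intros q Hq; apply HL1, Hq).
  assert (snd p = c2) as Ep2 by (apply (band_closure_row u v L2); auto; intros q Hq; apply HL2, Hq).
  rewrite Ep in Ep2. subst c2.
  apply image_strip_edge_components in HI1, HI2; auto.
  assert (Hdis : forall y, I1 y -> I2 y -> False).
  { intros y Hy1 Hy2. pose proof (maximal_interval_meet _ I1 I2 y HI1 HI2 Hy1 Hy2) as E.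
    destruct Hdiff as [q [[Hq1 Hq2]|[Hq1 Hq2]]]; apply Hq2;
      [apply HL2; apply HL1 in Hq1 | apply HL1; apply HL2 in Hq1];
      destruct Hq1; split; auto; apply E; auto. }
  pose proof HI1 as [_ [[y1 Hy1] [HI1O _]]]. pose proof HI2 as [_ [[y2 Hy2] [HI2O _]]].
  destruct (HI1O y1 Hy1) as [x1 [Hx1 <-]]. destruct (HI2O y2 Hy2) as [x2 [Hx2 <-]].
  pose proof (edge_open c Hc) as Hop.
  destruct (Rtotal_order x1 x2) as [l|[<-|l]].
  - destruct (boundary_image_separate _ Hop I1 I2 x1 x2) as [c0 [gam [Hg [S1 S2]]]]; auto.
    apply (band_closure_separated u v L1 L2 c0 gam p); auto.
    + intros q Hq. apply HL1 in Hq. apply S1, Hq.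
    + intros q Hq. apply HL2 in Hq. apply S2, Hq.
  - apply (Hdis _ Hy1 Hy2).
  - destruct (boundary_image_separate _ Hop I2 I1 x2 x1) as [c0 [gam [Hg [S2 S1]]]]; auto.
    + intros y Hy2' Hy1'. apply (Hdis y); auto.
    + apply (band_closure_separated u v L2 L1 c0 gam p); auto.
      * intros q Hq. apply HL2 in Hq. apply S2, Hq.
      * intros q Hq. apply HL1 in Hq. apply S1, Hq.
Qed.

Lemma image_strip_model : is_model_strip image_strip u v.
Proof.
  split; [apply image_strip_is_strip|].
  split; [apply image_strip_boundary_bounded | apply image_strip_boundary_closures_disjoint].
Qed.

Lemma strip_map_row_leaf t : u < t < v ->
  forall q, snd q = t <-> exists p, snd p = t /\ strip_map p = q.
Proof.
  intros Ht [y s]. simpl. split.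
  - intros ->. destruct (straighten_onto t y Ht) as [x Hx]. exists (x, t).
    split; auto. unfold strip_map; simpl. rewrite Hx. auto.
  - intros [p [Hp E]]. unfold strip_map in E. injection E as _ E. congruence.
Qed.

Lemma strip_map_boundary_leaf L : boundary_interval S u v L ->
  exists L', boundary_interval image_strip u v L' /\
    forall q, L' q <-> exists p, L p /\ strip_map p = q.
Proof.
  intros HL. apply boundary_interval_components in HL as [c [I [Hc [HI HL]]]].
  set (I' := fun y => exists x, I x /\ boundary_map (edge c) x = y).
  exists (fun q => snd q = c /\ I' (fst q)). split.
  - apply boundary_interval_components. exists c, I'. split; [|split]; auto; [|tauto].
    apply (maximal_interval_ext (boundary_image (edge c))).
    + intros y. symmetry. apply image_strip_edge, Hc.
    + apply boundary_map_image_maximal; [apply edge_open, Hc | exact HI].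
  - intros [y s]. simpl. split.
    + intros [-> [x [Hx <-]]]. exists (x, c). split; [apply HL; auto|].
      unfold strip_map; simpl. rewrite straighten_edge; auto.
    + intros [[x t] [Hp E]]. apply HL in Hp as [Ht Hx]. simpl in Ht, Hx. subst t.
      unfold strip_map in E; simpl in E. injection E as <- <-. split; auto.
      exists x. split; auto. symmetry. apply straighten_edge, Hc.
Qed.

Lemma strip_map_leaf L : leaf S u v L ->
  exists L', leaf image_strip u v L' /\ forall q, L' q <-> exists p, L p /\ strip_map p = q.
Proof.
  intros [[t [Ht HL]]|HL].
  - exists L. split; [left; exists t; auto|]. intros q.
    rewrite HL, (strip_map_row_leaf t Ht). split; intros [p [Hp E]]; exists p; rewrite HL in *; auto.
  - destruct (strip_map_boundary_leaf L HL) as [L' [HL' E]]. exists L'. split; auto. right. exact HL'.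
Qed.

End Strip.

Theorem mainTheorem1 (S : pt -> Prop) (u v : R) :
  is_strip S u v ->
  exists (S' : pt -> Prop) (u' v' : R) (h g : pt -> pt),
    is_model_strip S' u' v' /\
    homeomorphism S S' h g /\
    (forall L, leaf S u v L ->
       exists L', leaf S' u' v' L' /\
         forall q, L' q <-> exists p, L p /\ h p = q).
Proof.
  intros HS. exists (image_strip S u v), u, v, (strip_map S u v), (strip_inv S u v).
  split; [|split].
  - apply image_strip_model, HS.
  - apply strip_map_homeomorphism, HS.
  - apply strip_map_leaf, HS.
Qed.
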